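(* Let $\alpha,\beta\in(0,1)$ with $\alpha+\beta>1$. There is a constant $C$ (depending only on $\alpha,\beta$) such that for all sufficiently large $k$: with the medium-expectation rounding defined in the context, if $|\mathcal{M}_1^*(k)|>k^\beta$, $X_i$ ($i\in\mathcal{M}_1^*(k)$) are independent indicators with $\mathbb{E}[X_i]=p_i$ and $Y_i$ ($i\in\mathcal{M}_1^*(k)$) are independent indicators with $\mathbb{E}[Y_i]=q_i$, then $$\left\|\sum_{i\in\mathcal{M}_1^*(k)}X_i-\sum_{i\in\mathcal{M}_1^*(k)}Y_i\right\|\le C\left(k^{-\frac{\alpha+\beta-1}{2}}+k^{-\alpha}+k^{-1/2}\right).$$
   Context: $\|\cdot\|$ is total variation distance. Let $k$ be a positive integer, $\alpha\in(0,1)$, and $p_1,\dots,p_n\in[0,1]$. For $j=0,1,\dots,\lfloor k/2\rfloor$ let $I_j=[j/k,(j+1)/k)$ if $j<\lfloor k/2\rfloor$ and $I_{\lfloor k/2\rfloor}=[\lfloor k/2\rfloor/k,1/2]$; let $I^*_j=\{i:p_i\in I_j\}=\{j_1,\dots,j_{n_j}\}$ (listed in some fixed order, $n_j=|I^*_j|$), $p^j_i:=p_{j_i}$ and $\delta^j_i:=p^j_i-j/k$. Let $\mathcal{M}_1^*(k)=\bigcup_{j=\lfloor k^\alpha\rfloor}^{\lfloor k/2\rfloor}I^*_j$. Medium-expectation rounding: for $j=\lfloor k^\alpha\rfloor,\dots,\lfloor k/2\rfloor$ let $S_j=\sum_{i=1}^{n_j}\delta^j_i$, $m_j=\lfloor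 kS_j\rfloor$, and set $q_{j_i}=(j+1)/k$ for $i=1,\dots,m_j$ and $q_{j_i}=j/k$ for $i=m_j+1,\dots,n_j$. *)

From Stdlib Require Import Reals Lra Lia ZArith List.
Import ListNotations.
Open Scope R_scope.

Definition inI (k j : nat) (x : R) : Prop :=
  if Nat.ltb j (Nat.div k 2)
  then INR j / INR k <= x /\ x < INR (S j) / INR k
  else (j = Nat.div k 2 /\ INR j / INR k <= x /\ x <= 1/2).

Definition lowIdx (k : nat) (alpha : R) : nat :=
  Z.to_nat (Int_part (Rpower (INR k) alpha)).

Definition bucket_range (k : nat) (alpha : R) : list nat :=
  seq (lowIdx k alpha) (S (Nat.div k 2) - lowIdx k alpha).

Definition sumR (l : list R) : R := fold_right Rplus 0 l.

Definition S_bucket (k j : nat) (p : nat -> R) (l : list nat) : R :=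
  sumR (map (fun i => p i - INR j / INR k) l).

Definition m_bucket (k j : nat) (p : nat -> R) (l : list nat) : Z :=
  Int_part (INR k * S_bucket k j p l).

(* Law of a sum of independent indicators with means ps (Poisson binomial):
   pb ps m = P(sum = m). *)
Fixpoint pb (ps : list R) (m : nat) : R :=
  match ps with
  | [] => match m with O => 1 | S _ => 0 end
  | p :: ps' =>
      match m with
      | O => (1 - p) * pb ps' O
      | S m' => p * pb ps' m' + (1 - p) * pb ps' m
      end
  end.

Definition tv_pb (ps qs : list R) : R :=
  / 2 * sum_f_R0 (fun m => Rabs (pb ps m - pb qs m)) (Nat.max (length ps) (length qs)).

(* A law on nat is a sequence f : nat -> R.  Adding an independent
   Bernoulli(r) summand is  bern r f = r shift f + (1-r) f  and  diff f =
   shift f - f; these operators commute, so pb l is a product of them.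
   1. Binomial(n,1/2): |D pb|_1 = O(n^(-1/2)) and |D^2 pb|_1 = O(1/n).
   2. Mixture: a Bernoulli(r) with r in [a,1-a] mixes Bernoulli(1/2) with
      weight 2a, so for N such probabilities |D pb|_1 = O((Na)^(-1/2)) and
      |D^2 pb|_1 = O(1/(Na)).
   3. Telescoping: swapping the values of a bucket of width h whose suffix
      sums of (x_i - y_i) stay below h costs h |D pb|_1 + m h^2 |D^2 pb|_1.
   4. Each rounded bucket is, up to order, a sequential floor rounding whose
      suffix sums are below 1/k; with a = k^alpha/(4k), h = 1/k, at most
      k/2 + 1 buckets and N > k^beta values, steps 2-3 give the theorem. *)
From Stdlib Require Import Reals ZArith List.
From Stdlib Require Import Lra Lia Psatz Permutation FunctionalExtensionality.
Import ListNotations.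
Open Scope R_scope.

(* (shift f) m = f (m - 1): the law of S + 1 when f is the law of S. *)
Definition shift (f : nat -> R) (m : nat) : R :=
  match m with O => 0 | S m' => f m' end.

(* Law of S + B with B ~ Bernoulli(r) independent of S ~ f. *)
Definition bern (r : R) (f : nat -> R) (m : nat) : R := r * shift f m + (1 - r) * f m.

Definition diff (f : nat -> R) (m : nat) : R := shift f m - f m.

Fixpoint diff_iter (d : nat) (f : nat -> R) : nat -> R :=
  match d with O => f | S d' => diff (diff_iter d' f) end.

Lemma pb_cons r l : pb (r :: l) = bern r (pb l).
Proof. apply functional_extensionality; intros [|m]; unfold bern; simpl; ring. Qed.

Lemma bern_comm r s f : bern r (bern s f) = bern s (bern r f).
Proof.
  apply functional_extensionality; intros [|[|m]]; unfold bern; simpl; ring.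
Qed.

Lemma diff_bern r f : diff (bern r f) = bern r (diff f).
Proof.
  apply functional_extensionality; intros [|[|m]]; unfold bern, diff; simpl; ring.
Qed.

Lemma diff_iter_bern d r f : diff_iter d (bern r f) = bern r (diff_iter d f).
Proof. induction d; simpl; auto. rewrite IHd, diff_bern; auto. Qed.

Lemma diff_iter_lin d c1 c2 f g :
  diff_iter d (fun m => c1 * f m + c2 * g m) = (fun m => c1 * diff_iter d f m + c2 * diff_iter d g m).
Proof.
  induction d; simpl; auto. rewrite IHd.
  apply functional_extensionality; intros [|m]; unfold diff; simpl; ring.
Qed.

Lemma bern_sub x y f m : bern x f m - bern y f m = (x - y) * diff f m.
Proof. unfold bern, diff; ring. Qed.

Lemma pb_perm l1 l2 : Permutation l1 l2 -> pb l1 = pb l2.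
Proof.
  induction 1; auto.
  - rewrite !pb_cons, IHPermutation; auto.
  - rewrite !pb_cons; apply bern_comm.
  - congruence.
Qed.

Lemma pb_middle z l1 l2 : pb (l1 ++ z :: l2) = pb (z :: l1 ++ l2).
Proof. apply pb_perm. symmetry. apply Permutation_middle. Qed.

Definition l1 (L : nat) (f : nat -> R) : R := sum_f_R0 (fun m => Rabs (f m)) L.

Lemma l1_nonneg L f : 0 <= l1 L f.
Proof. apply cond_pos_sum; intros; apply Rabs_pos. Qed.

Lemma l1_ext L f g : (forall m, f m = g m) -> l1 L f = l1 L g.
Proof. intros H; unfold l1; apply sum_eq; intros; rewrite H; auto. Qed.

Lemma l1_zero L : l1 L (fun _ => 0) = 0.
Proof. unfold l1; rewrite Rabs_R0; induction L; simpl; lra. Qed.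

Lemma l1_triangle L f g : l1 L (fun m => f m + g m) <= l1 L f + l1 L g.
Proof. unfold l1; rewrite <- sum_plus; apply sum_Rle; intros; apply Rabs_triang. Qed.

Lemma l1_scal L c f : l1 L (fun m => c * f m) = Rabs c * l1 L f.
Proof.
  unfold l1; rewrite scal_sum; apply sum_eq; intros; rewrite Rabs_mult; ring.
Qed.

Lemma l1_shift L f : l1 L (shift f) <= l1 L f.
Proof.
  assert (E : forall L, l1 (S L) (shift f) = l1 L f).
  { induction L0; [unfold l1; simpl; rewrite Rabs_R0; ring|].
    change (l1 (S (S L0)) (shift f)) with (l1 (S L0) (shift f) + Rabs (f (S L0))).
    rewrite IHL0; reflexivity. }
  destruct L as [|L].
  - unfold l1; simpl; rewrite Rabs_R0; apply Rabs_pos.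
  - rewrite E. change (l1 (S L) f) with (l1 L f + Rabs (f (S L))).
    pose proof (Rabs_pos (f (S L))); lra.
Qed.

Lemma l1_bern L r f : 0 <= r <= 1 -> l1 L (bern r f) <= l1 L f.
Proof.
  intros Hr. unfold bern.
  eapply Rle_trans; [apply l1_triangle|].
  rewrite l1_scal, l1_scal, (Rabs_pos_eq r), (Rabs_pos_eq (1 - r)) by lra.
  pose proof (l1_shift L f). pose proof (l1_nonneg L f). nra.
Qed.

Lemma sum_le_len f L K : (forall m, 0 <= f m) -> (L <= K)%nat ->
  sum_f_R0 f L <= sum_f_R0 f K.
Proof. intros Hf HL; induction HL; [lra|]. rewrite tech5. pose proof (Hf (S m)); lra. Qed.

Lemma sum_le_support f L K : (forall m, 0 <= f m) -> (forall m, (K < m)%nat -> f m = 0) ->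
  sum_f_R0 f L <= sum_f_R0 f K.
Proof.
  intros Hf Hz. destruct (le_lt_dec L K) as [HL|HL]; [apply sum_le_len; auto|].
  induction HL; [rewrite tech5, (Hz (S K)) by lia; lra|].
  rewrite tech5, (Hz (S m)) by lia. lra.
Qed.

Definition in01 (r : R) : Prop := 0 <= r <= 1.

Lemma pb_zero l m : (length l < m)%nat -> pb l m = 0.
Proof.
  revert m; induction l as [|r l IH]; intros [|m] Hm; simpl in *; try lia; auto.
  rewrite !IH by lia. ring.
Qed.

Lemma pb_nonneg l : Forall in01 l -> forall m, 0 <= pb l m.
Proof.
  induction 1 as [|r l Hr Hl IH]; intros [|m]; simpl; try lra; unfold in01 in Hr.
  - pose proof (IH O); nra.
  - pose proof (IH m); pose proof (IH (S m)); nra.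
Qed.

Lemma in01_repeat x n : in01 x -> Forall in01 (repeat x n).
Proof. intros H; apply Forall_forall; intros y Hy; apply repeat_spec in Hy; subst; auto. Qed.

(* E[t(S)] for S distributed as pb l. *)
Definition Ex (l : list R) (t : nat -> R) : R :=
  sum_f_R0 (fun s => pb l s * t s) (length l).

Lemma sum_first f n : sum_f_R0 f (S n) = f O + sum_f_R0 (fun s => f (S s)) n.
Proof. induction n; [simpl; ring|]. rewrite tech5, IHn. simpl. ring. Qed.

Lemma sum_scal_l c f N : sum_f_R0 (fun s => c * f s) N = c * sum_f_R0 f N.
Proof. rewrite scal_sum; apply sum_eq; intros; ring. Qed.

(* Conditioning on the first summand. *)
Lemma Ex_cons r l t :
  Ex (r :: l) t = r * Ex l (fun s => t (S s)) + (1 - r) * Ex l t.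
Proof.
  unfold Ex. simpl length. rewrite pb_cons.
  transitivity (sum_f_R0 (fun s => r * (shift (pb l) s * t s) + (1 - r) * (pb l s * t s))
                  (S (length l))).
  { apply sum_eq; intros; unfold bern; ring. }
  rewrite sum_plus, sum_scal_l, sum_scal_l, sum_first, tech5.
  rewrite (pb_zero l (S (length l))) by lia. simpl shift. ring.
Qed.

Lemma Ex_ext l t1 t2 : (forall s, (s <= length l)%nat -> t1 s = t2 s) -> Ex l t1 = Ex l t2.
Proof. intros H; unfold Ex; apply sum_eq; intros; rewrite H; auto. Qed.

Lemma Ex_plus l t1 t2 : Ex l (fun s => t1 s + t2 s) = Ex l t1 + Ex l t2.
Proof. unfold Ex; rewrite <- sum_plus; apply sum_eq; intros; ring. Qed.

Lemma Ex_scal l c t : Ex l (fun s => c * t s) = c * Ex l t.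
Proof. unfold Ex; rewrite <- sum_scal_l; apply sum_eq; intros; ring. Qed.

Lemma Ex_mono l t1 t2 : Forall in01 l ->
  (forall s, (s <= length l)%nat -> t1 s <= t2 s) -> Ex l t1 <= Ex l t2.
Proof.
  intros Hl H; unfold Ex; apply sum_Rle; intros s Hs.
  pose proof (pb_nonneg l Hl s). pose proof (H s Hs). nra.
Qed.

Lemma Ex_one l : Ex l (fun _ => 1) = 1.
Proof. induction l as [|r l IH]; [unfold Ex; simpl; ring|]. rewrite Ex_cons, IH. ring. Qed.

Lemma Ex_const l c : Ex l (fun _ => c) = c.
Proof.
  rewrite (Ex_ext l _ (fun _ => c * 1)) by (intros; ring). rewrite Ex_scal, Ex_one; ring.
Qed.

Lemma Ex_mean l : Ex l INR = sumR l.
Proof.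
  induction l as [|r l IH]; [unfold Ex; simpl; ring|]. rewrite Ex_cons.
  rewrite (Ex_ext l (fun s => INR (S s)) (fun s => INR s + 1)) by (intros; rewrite S_INR; ring).
  rewrite Ex_plus, Ex_one, IH. simpl. ring.
Qed.

Lemma Ex_second_moment l : Ex l (fun s => INR s * INR s) =
  sumR (map (fun r => r * (1 - r)) l) + sumR l * sumR l.
Proof.
  induction l as [|r l IH]; [unfold Ex; simpl; ring|]. rewrite Ex_cons.
  rewrite (Ex_ext l (fun s => INR (S s) * INR (S s))
             (fun s => INR s * INR s + (2 * INR s + 1 * 1))) by (intros; rewrite S_INR; ring).
  rewrite !Ex_plus, IH, Ex_scal, Ex_scal, Ex_one, Ex_mean. simpl. ring.
Qed.

Lemma abs_le_amgm x c : 0 < c -> Rabs x <= (/ c / 2) * (x * x) + c / 2.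
Proof.
  intros Hc.
  assert (Hy : Rabs x * Rabs x = x * x) by (rewrite <- Rabs_mult; apply Rabs_pos_eq; nra).
  assert (Hp : 0 < / c) by (apply Rinv_0_lt_compat; lra).
  assert (H2 : 0 <= (Rabs x - c) * (Rabs x - c) * / c)
    by (apply Rmult_le_pos; [apply Rle_0_sqr | lra]).
  assert (E : (Rabs x - c) * (Rabs x - c) * / c = (/ c) * (x * x) - 2 * Rabs x + c)
    by (rewrite <- Hy; field; lra).
  lra.
Qed.

Lemma Ex_cauchy_schwarz l g : Forall in01 l -> 0 < Ex l (fun s => g s * g s) ->
  Ex l (fun s => Rabs (g s)) <= sqrt (Ex l (fun s => g s * g s)).
Proof.
  intros Hl HV. set (V := Ex l (fun s => g s * g s)) in *.
  set (c := sqrt V).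
  assert (Hc : 0 < c) by (apply sqrt_lt_R0; auto).
  assert (Hcc : c * c = V) by (apply sqrt_sqrt; lra).
  eapply Rle_trans.
  { apply (Ex_mono l _ (fun s => (/ c / 2) * (g s * g s) + (c / 2) * 1)); auto.
    intros s _. rewrite Rmult_1_r. apply abs_le_amgm; auto. }
  rewrite Ex_plus, Ex_scal, Ex_scal, Ex_one. fold V. rewrite <- Hcc.
  right; field; lra.
Qed.

Lemma l1_pb L l : Forall in01 l -> l1 L (pb l) <= 1.
Proof.
  intros Hl. rewrite <- (Ex_one l). unfold Ex, l1.
  eapply Rle_trans.
  - apply (sum_le_support (fun m => Rabs (pb l m)) L (length l)); [intros; apply Rabs_pos|].
    intros m Hm; rewrite pb_zero by auto; apply Rabs_R0.
  - right; apply sum_eq; intros. rewrite Rabs_pos_eq by (apply pb_nonneg; auto). ring.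
Qed.

(** * Binomial laws *)

Lemma sumR_repeat x n : sumR (repeat x n) = INR n * x.
Proof.
  induction n; [simpl; ring|]. unfold sumR in *; simpl fold_right. rewrite IHn, S_INR; ring.
Qed.

Lemma binom_absorption (p : R) (n s : nat) :
  INR (S s) * pb (repeat p (S n)) (S s) = INR (S n) * p * pb (repeat p n) s.
Proof.
  revert s; induction n as [|n IH]; intros s; [destruct s; simpl; ring|].
  change (repeat p (S (S n))) with (p :: repeat p (S n)).
  change (repeat p (S n)) with (p :: repeat p n) at 2.
  destruct s as [|s].
  - pose proof (IH O) as H0. simpl pb in *. rewrite !S_INR in *. simpl INR in *.
    set (X := pb (repeat p n) 0) in *. set (Y := pb (repeat p n) 1) in *.
    replace ((0 + 1) * (p * ((1 - p) * X) + (1 - p) * (p * X + (1 - p) * Y)))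
      with (p * (1 - p) * X + (1 - p) * ((0 + 1) * (p * X + (1 - p) * Y))) by ring.
    rewrite H0. ring.
  - pose proof (IH (S s)) as H1. pose proof (IH s) as H2.
    change (pb (p :: repeat p (S n)) (S (S s))) with
      (p * pb (repeat p (S n)) (S s) + (1 - p) * pb (repeat p (S n)) (S (S s))).
    change (pb (p :: repeat p n) (S s)) with
      (p * pb (repeat p n) s + (1 - p) * pb (repeat p n) (S s)).
    assert (HA : pb (repeat p (S n)) (S s) = p * pb (repeat p n) s + (1 - p) * pb (repeat p n) (S s))
      by reflexivity.
    rewrite !S_INR in *.
    replace ((INR s + 1 + 1) * (p * pb (repeat p (S n)) (S s) + (1 - p) * pb (repeat p (S n)) (S (S s))))
      with (p * ((INR s + 1) * pb (repeat p (S n)) (S s)) + p * pb (repeat p (S n)) (S s)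
            + (1 - p) * ((INR s + 1 + 1) * pb (repeat p (S n)) (S (S s)))) by ring.
    rewrite H1, H2, HA. ring.
Qed.

Lemma Ex_inv_succ p n : 0 < p <= 1 ->
  Ex (repeat p n) (fun s => / (INR s + 1)) <= / (INR (S n) * p).
Proof.
  intros Hp. unfold Ex. rewrite repeat_length.
  assert (Hn : 0 < INR (S n)) by (apply lt_0_INR; lia).
  transitivity (sum_f_R0 (fun s => / (INR (S n) * p) * pb (repeat p (S n)) (S s)) n).
  - right. apply sum_eq; intros s _.
    pose proof (binom_absorption p n s) as H. rewrite S_INR in H.
    assert (0 < INR s + 1) by (pose proof (pos_INR s); lra).
    replace (pb (repeat p n) s)
      with ((INR s + 1) * pb (repeat p (S n)) (S s) / (INR (S n) * p)) by (rewrite H; field; nra).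
    field. nra.
  - rewrite sum_scal_l.
    assert (Hs : sum_f_R0 (fun s => pb (repeat p (S n)) (S s)) n <= 1).
    { pose proof (Ex_one (repeat p (S n))) as E. unfold Ex in E.
      rewrite repeat_length, sum_first in E.
      assert (0 <= pb (repeat p (S n)) 0) by (apply pb_nonneg, in01_repeat; unfold in01; lra).
      rewrite (sum_eq _ (fun s => pb (repeat p (S n)) (S s))) in E by (intros; ring).
      lra. }
    assert (0 < / (INR (S n) * p)) by (apply Rinv_0_lt_compat; nra).
    nra.
Qed.

Lemma Ex_inv_succ_pos p n : 0 < p <= 1 -> 0 < Ex (repeat p n) (fun s => / (INR s + 1)).
Proof.
  intros Hp.
  assert (Hn : 0 < INR n + 1) by (pose proof (pos_INR n); lra).
  apply Rlt_le_trans with (Ex (repeat p n) (fun _ => / (INR n + 1))).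
  - rewrite Ex_const. apply Rinv_0_lt_compat; lra.
  - apply Ex_mono; [apply in01_repeat; unfold in01; lra|].
    intros s Hs. rewrite repeat_length in Hs. apply le_INR in Hs.
    apply Rinv_le_contravar; [pose proof (pos_INR s)|]; lra.
Qed.

Lemma Ex_binom_half_var N :
  Ex (repeat (/2) N) (fun s => (2 * INR s - INR N) * (2 * INR s - INR N)) = INR N.
Proof.
  rewrite (Ex_ext _ _ (fun s => 4 * (INR s * INR s) + (- 4 * INR N * INR s + (INR N * INR N) * 1)))
    by (intros; ring).
  rewrite !Ex_plus, !Ex_scal, Ex_one, Ex_second_moment, Ex_mean, map_repeat, !sumR_repeat. field.
Qed.

Lemma binom_half_abs_moment N : 0 < INR N ->
  Ex (repeat (/2) N) (fun s => Rabs (2 * INR s - INR N)) <= sqrt (INR N).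
Proof.
  intros HN.
  assert (Hin : Forall in01 (repeat (/2) N)) by (apply in01_repeat; unfold in01; lra).
  pose proof (Ex_cauchy_schwarz _ (fun s => 2 * INR s - INR N) Hin) as J.
  cbv beta in J. rewrite Ex_binom_half_var in J. auto.
Qed.

Lemma diff_binom_half n m :
  diff (pb (repeat (/2) n)) m = 2 * (2 * INR m - INR (S n)) / INR (S n) * pb (repeat (/2) (S n)) m.
Proof.
  assert (Hu : INR m * pb (repeat (/2) (S n)) m = INR (S n) * / 2 * shift (pb (repeat (/2) n)) m).
  { destruct m as [|m]; simpl shift; [simpl INR; ring|apply binom_absorption]. }
  assert (Hw : pb (repeat (/2) (S n)) m = bern (/2) (pb (repeat (/2) n)) m)
    by (rewrite <- pb_cons; reflexivity).
  assert (Hn : 0 < INR (S n)) by (apply lt_0_INR; lia).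
  unfold bern in Hw. unfold diff.
  set (u := shift (pb (repeat (/2) n)) m) in *.
  set (v := pb (repeat (/2) n) m) in *.
  set (w := pb (repeat (/2) (S n)) m) in *.
  assert (Hu' : u = 2 * INR m * w / INR (S n))
    by (apply (Rmult_eq_reg_l (INR (S n))); [field_simplify; lra|lra]).
  replace v with (2 * w - u) by lra. rewrite Hu'. field. lra.
Qed.

Lemma l1_diff_binom_half n L : l1 L (diff (pb (repeat (/2) n))) <= 2 / sqrt (INR n + 1).
Proof.
  set (w := pb (repeat (/2) (S n))).
  assert (Hin : Forall in01 (repeat (/2) (S n))) by (apply in01_repeat; unfold in01; lra).
  assert (Hn : 0 < INR (S n)) by (apply lt_0_INR; lia).
  set (c := 2 / INR (S n)).
  assert (Hc : 0 < c) by (unfold c; apply Rdiv_lt_0_compat; lra).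
  set (t := fun m => c * (w m * Rabs (2 * INR m - INR (S n)))).
  assert (Ht : forall m, 0 <= t m).
  { intros m. apply Rmult_le_pos; [lra|].
    apply Rmult_le_pos; [apply pb_nonneg; auto|apply Rabs_pos]. }
  apply Rle_trans with (sum_f_R0 t L).
  { apply sum_Rle; intros m _. rewrite diff_binom_half. fold w. unfold t.
    replace (2 * (2 * INR m - INR (S n)) / INR (S n) * w m)
      with (c * ((2 * INR m - INR (S n)) * w m)) by (unfold c; field; lra).
    rewrite !Rabs_mult, (Rabs_pos_eq c), (Rabs_pos_eq (w m)) by (lra || apply pb_nonneg; auto).
    right; ring. }
  eapply Rle_trans.
  { apply (sum_le_support _ L (S n)); auto.
    intros m Hm. unfold t, w. rewrite pb_zero by (rewrite repeat_length; lia). ring. }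
  unfold t. rewrite sum_scal_l.
  pose proof (binom_half_abs_moment (S n) Hn) as HE. unfold Ex in HE.
  rewrite repeat_length in HE. fold w in HE.
  assert (Hs : 0 < sqrt (INR (S n))) by (apply sqrt_lt_R0; lra).
  apply Rle_trans with (c * sqrt (INR (S n))); [apply Rmult_le_compat_l; lra|].
  right. unfold c. rewrite <- S_INR.
  assert (Hss : INR (S n) = sqrt (INR (S n)) * sqrt (INR (S n))) by (rewrite sqrt_sqrt; lra).
  set (r := sqrt (INR (S n))) in *. rewrite Hss. field. lra.
Qed.

Lemma diff2_binom_half n m :
  let c := 2 / (INR n + 1) in
  let g := 2 * INR m - (INR n + 2) in
  diff (diff (pb (repeat (/2) n))) m =
    c * (2 / (INR n + 2)) * ((g + 1) * g * pb (repeat (/2) (S (S n))) m)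
    - 2 * c * shift (pb (repeat (/2) (S n))) m.
Proof.
  intros c g.
  assert (Hn : 0 < INR n + 1) by (pose proof (pos_INR n); lra).
  set (w1 := pb (repeat (/2) (S n))). set (w2 := pb (repeat (/2) (S (S n)))).
  assert (HD : forall m', diff (pb (repeat (/2) n)) m' = c * (2 * INR m' - (INR n + 1)) * w1 m').
  { intros m'. rewrite diff_binom_half. unfold c, w1. rewrite S_INR. field. lra. }
  assert (HS : shift (diff (pb (repeat (/2) n))) m = c * (2 * INR m - (INR n + 3)) * shift w1 m).
  { destruct m; simpl shift; [ring|]. rewrite HD, S_INR. ring. }
  assert (HD1 : shift w1 m - w1 m = 2 / (INR n + 2) * g * w2 m).
  { pose proof (diff_binom_half (S n) m) as E. unfold diff in E. fold w1 w2 in E. rewrite E.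
    unfold g. rewrite !S_INR. field. lra. }
  unfold diff at 1. rewrite HS, (HD m).
  replace (c * (2 * INR m - (INR n + 3)) * shift w1 m - c * (2 * INR m - (INR n + 1)) * w1 m)
    with (c * ((g + 1) * (shift w1 m - w1 m)) - 2 * c * shift w1 m) by (unfold g; ring).
  rewrite HD1. ring.
Qed.

Lemma binom_half_product_moment N : 1 <= INR N ->
  Ex (repeat (/2) N) (fun s => Rabs ((2 * INR s - INR N + 1) * (2 * INR s - INR N))) <= 2 * INR N.
Proof.
  intros HN. set (g := fun s => 2 * INR s - INR N).
  assert (Hin : Forall in01 (repeat (/2) N)) by (apply in01_repeat; unfold in01; lra).
  apply Rle_trans with (Ex (repeat (/2) N) (fun s => g s * g s + Rabs (g s))).
  { apply Ex_mono; auto. intros s _. fold (g s).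
    replace ((g s + 1) * g s) with (g s * g s + g s) by ring.
    eapply Rle_trans; [apply Rabs_triang|]. rewrite Rabs_pos_eq by nra. lra. }
  rewrite Ex_plus. unfold g. rewrite Ex_binom_half_var.
  pose proof (binom_half_abs_moment N ltac:(lra)).
  assert (sqrt (INR N) <= INR N).
  { pose proof (sqrt_sqrt (INR N)) as Q. pose proof (sqrt_pos (INR N)). nra. }
  lra.
Qed.

Lemma l1_diff2_binom_half n L : l1 L (diff (diff (pb (repeat (/2) n)))) <= 12 / (INR n + 1).
Proof.
  set (w1 := pb (repeat (/2) (S n))). set (w2 := pb (repeat (/2) (S (S n)))).
  assert (Hin2 : Forall in01 (repeat (/2) (S (S n)))) by (apply in01_repeat; unfold in01; lra).
  assert (Hn : 0 < INR n + 1) by (pose proof (pos_INR n); lra).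
  set (c := 2 / (INR n + 1)).
  assert (Hc : 0 < c) by (unfold c; apply Rdiv_lt_0_compat; lra).
  set (c2 := c * (2 / (INR n + 2))).
  assert (Hc2 : 0 <= c2) by (apply Rmult_le_pos; [lra|apply Rlt_le, Rdiv_lt_0_compat; lra]).
  set (t := fun m => Rabs ((2 * INR m - (INR n + 2) + 1) * (2 * INR m - (INR n + 2))) * w2 m).
  assert (Ht : forall m, 0 <= t m).
  { intros m. apply Rmult_le_pos; [apply Rabs_pos|apply pb_nonneg; auto]. }
  apply Rle_trans with (c2 * sum_f_R0 t (S (S n)) + 2 * c * l1 L (shift w1)).
  { apply Rle_trans with (sum_f_R0 (fun m => c2 * t m + 2 * c * Rabs (shift w1 m)) L).
    - apply sum_Rle; intros m _.
      rewrite diff2_binom_half. fold c w1 w2 c2. unfold t.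
      unfold Rminus. eapply Rle_trans; [apply Rabs_triang|].
      rewrite Rabs_Ropp, !Rabs_mult, (Rabs_pos_eq c2), (Rabs_pos_eq (w2 m)), (Rabs_pos_eq 2)
        by (lra || apply pb_nonneg; auto).
      rewrite (Rabs_pos_eq c) by lra. right; ring.
    - rewrite sum_plus, !sum_scal_l. fold (l1 L (shift w1)).
      apply Rplus_le_compat_r, Rmult_le_compat_l; auto.
      apply sum_le_support; auto.
      intros m Hm. unfold t, w2. rewrite pb_zero by (rewrite repeat_length; lia). ring. }
  assert (HA : sum_f_R0 t (S (S n)) <= 2 * (INR n + 2)).
  { assert (HN : 1 <= INR (S (S n))) by (rewrite !S_INR; lra).
    pose proof (binom_half_product_moment (S (S n)) HN) as E. unfold Ex in E.
    rewrite repeat_length in E. rewrite !S_INR in E.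
    replace (INR n + 1 + 1) with (INR n + 2) in E by ring.
    unfold t. rewrite (sum_eq _ (fun s => pb (repeat (/ 2) (S (S n))) s *
      Rabs ((2 * INR s - (INR n + 2) + 1) * (2 * INR s - (INR n + 2))))) by (intros; unfold w2; ring).
    exact E. }
  assert (HB : l1 L (shift w1) <= 1).
  { eapply Rle_trans; [apply l1_shift|]. apply l1_pb, in01_repeat; unfold in01; lra. }
  apply Rle_trans with (c2 * (2 * (INR n + 2)) + 2 * c * 1).
  { apply Rplus_le_compat; apply Rmult_le_compat_l; lra. }
  right. unfold c2, c. field. lra.
Qed.

(** * Probabilities bounded away from 0 and 1 *)

Definition good (a r : R) : Prop := a <= r <= 1 - a.

(* Each Bernoulli(r) with r in [a, 1-a] is the mixture of Bernoulli(1/2) with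
   weight 2a and of some other Bernoulli; so differences of pb (rs ++ hs) are
   controlled by those of pb (Bin(S,1/2) ++ hs) with S ~ Bin(|rs|, 2a). *)
Lemma mixture a d : 0 < a -> a < /2 -> forall rs, Forall (good a) rs -> forall hs L,
  l1 L (diff_iter d (pb (rs ++ hs))) <=
  Ex (repeat (2 * a) (length rs)) (fun s => l1 L (diff_iter d (pb (repeat (/2) s ++ hs)))).
Proof.
  intros Ha Ha2 rs Hrs. induction Hrs as [|r rs Hr Hrs IH]; intros hs L.
  - unfold Ex; simpl. lra.
  - simpl app. rewrite pb_cons.
    set (F := pb (rs ++ hs)).
    set (r' := (r - a) / (1 - 2 * a)).
    assert (Hr' : 0 <= r' <= 1).
    { unfold r', good in *. split.
      - apply Rmult_le_pos; [lra|apply Rlt_le, Rinv_0_lt_compat; lra].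
      - apply (Rmult_le_reg_r (1 - 2 * a)); [lra|]. field_simplify; lra. }
    assert (HB : bern r F = (fun m => (2 * a) * bern (/2) F m + (1 - 2 * a) * bern r' F m)).
    { apply functional_extensionality; intros m. unfold bern, r'. field. lra. }
    assert (H2 : bern (/2) F = pb (rs ++ /2 :: hs)).
    { unfold F. rewrite <- pb_cons. apply pb_perm, Permutation_middle. }
    rewrite HB, H2, diff_iter_lin.
    eapply Rle_trans; [apply l1_triangle|].
    rewrite (l1_scal L (2 * a)), (l1_scal L (1 - 2 * a)).
    rewrite (Rabs_pos_eq (2 * a)), (Rabs_pos_eq (1 - 2 * a)) by lra.
    rewrite diff_iter_bern.
    assert (H1 : l1 L (bern r' (diff_iter d F)) <= l1 L (diff_iter d F)) by (apply l1_bern; auto).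
    simpl length. change (repeat (2 * a) (S (length rs))) with (2 * a :: repeat (2 * a) (length rs)).
    rewrite Ex_cons.
    rewrite (Ex_ext _ (fun s => l1 L (diff_iter d (pb (repeat (/2) (S s) ++ hs))))
                      (fun s => l1 L (diff_iter d (pb (repeat (/2) s ++ /2 :: hs))))).
    2: { intros s _. simpl repeat. simpl app. rewrite pb_middle. reflexivity. }
    pose proof (IH (/2 :: hs) L). pose proof (IH hs L). unfold F in *. nra.
Qed.

Lemma l1_diff_pb a zs L : 0 < a -> a < /2 -> Forall (good a) zs ->
  l1 L (diff (pb zs)) <= 2 * sqrt (/ (INR (S (length zs)) * (2 * a))).
Proof.
  intros Ha Ha2 Hz.
  pose proof (mixture a 1 Ha Ha2 zs Hz [] L) as M. rewrite app_nil_r in M. simpl diff_iter in M.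
  set (n := length zs) in *.
  assert (Hin : Forall in01 (repeat (2 * a) n)) by (apply in01_repeat; unfold in01; lra).
  set (g := fun s : nat => / sqrt (INR s + 1)).
  assert (Hgg : Ex (repeat (2 * a) n) (fun s => g s * g s) =
                Ex (repeat (2 * a) n) (fun s => / (INR s + 1))).
  { apply Ex_ext. intros s _. unfold g. rewrite <- Rinv_mult, sqrt_sqrt; auto.
    pose proof (pos_INR s); lra. }
  eapply Rle_trans; [apply M|].
  eapply Rle_trans.
  { apply (Ex_mono _ _ (fun s => 2 * Rabs (g s))); auto.
    intros s _. rewrite app_nil_r. eapply Rle_trans; [apply l1_diff_binom_half|].
    unfold g. rewrite Rabs_pos_eq; [right; unfold Rdiv; ring|].
    apply Rlt_le, Rinv_0_lt_compat, sqrt_lt_R0. pose proof (pos_INR s); lra. }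
  rewrite Ex_scal. apply Rmult_le_compat_l; [lra|].
  eapply Rle_trans; [apply Ex_cauchy_schwarz; auto; rewrite Hgg; apply Ex_inv_succ_pos; lra|].
  rewrite Hgg. apply sqrt_le_1_alt, Ex_inv_succ. lra.
Qed.

Lemma l1_diff2_pb a zs L : 0 < a -> a < /2 -> Forall (good a) zs ->
  l1 L (diff (diff (pb zs))) <= 12 * / (INR (S (length zs)) * (2 * a)).
Proof.
  intros Ha Ha2 Hz.
  pose proof (mixture a 2 Ha Ha2 zs Hz [] L) as M. rewrite app_nil_r in M. simpl diff_iter in M.
  assert (Hin : Forall in01 (repeat (2 * a) (length zs))) by (apply in01_repeat; unfold in01; lra).
  eapply Rle_trans; [apply M|].
  eapply Rle_trans.
  { apply (Ex_mono _ _ (fun s => 12 * / (INR s + 1))); auto.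
    intros s _. rewrite app_nil_r. eapply Rle_trans; [apply l1_diff2_binom_half|].
    right; unfold Rdiv; ring. }
  rewrite Ex_scal. apply Rmult_le_compat_l; [lra|]. apply Ex_inv_succ. lra.
Qed.

(** * Telescoping inside a bucket *)

Definition sum_diff (ps : list (R * R)) : R := sumR (map (fun xy => fst xy - snd xy) ps).

Fixpoint suffix_bounded (h : R) (ps : list (R * R)) : Prop :=
  match ps with
  | [] => True
  | _ :: ps' => Rabs (sum_diff ps) <= h /\ suffix_bounded h ps'
  end.

Definition in_window (a c h : R) (xy : R * R) : Prop :=
  c <= fst xy <= c + h /\ c <= snd xy <= c + h /\ good a (fst xy) /\ good a (snd xy).

Lemma window_good_fst a c h ps : Forall (in_window a c h) ps -> Forall (good a) (map fst ps).
Proof. intros H; apply Forall_map; eapply Forall_impl; [|exact H]; intros xy Hxy; apply Hxy. Qed.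

Lemma window_good_snd a c h ps : Forall (in_window a c h) ps -> Forall (good a) (map snd ps).
Proof. intros H; apply Forall_map; eapply Forall_impl; [|exact H]; intros xy Hxy; apply Hxy. Qed.

Lemma l1_scaled_le L s f h b : Rabs s <= h -> l1 L f <= b -> Rabs s * l1 L f <= h * b.
Proof. intros Hs Hf. apply Rmult_le_compat; auto using Rabs_pos, l1_nonneg. Qed.

Section Telescoping.
Variables (a h b1 b2 : R) (ell : nat).
Hypothesis Hh : 0 <= h.
Hypothesis Hb1 : 0 <= b1.
Hypothesis Hb2 : 0 <= b2.
Hypothesis Hdiff1 : forall zs, (ell <= length zs)%nat -> Forall (good a) zs ->
  forall L, l1 L (diff (pb zs)) <= b1.
Hypothesis Hdiff2 : forall zs, (ell <= length zs)%nat -> Forall (good a) zs ->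
  forall L, l1 L (diff (diff (pb zs))) <= b2.

(* Swapping x_1..x_m for y_1..y_m one at a time: the first-order term is the
   total shift times D pb, each later swap costs a second difference weighted
   by (suffix sum) * (y_i - x_(i+1)), both at most h. *)
Lemma telescope_bucket c : forall ps x y P Q,
  Forall (good a) P -> Forall (good a) Q -> Forall (in_window a c h) ((x, y) :: ps) ->
  suffix_bounded h ((x, y) :: ps) ->
  (ell + 1 <= length P + length ps + length Q)%nat ->
  exists Err : nat -> R,
    (forall m, pb (P ++ x :: map fst ps ++ Q) m - pb (P ++ y :: map snd ps ++ Q) m =
       sum_diff ((x, y) :: ps) * diff (pb (P ++ map fst ps ++ Q)) m + Err m) /\
    (forall L, l1 L Err <= INR (length ps) * (h * h * b2)).
Proof.
  induction ps as [|[x1 y1] ps IH]; intros x y P Q HP HQ Hps Hsuf Hlen.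
  - exists (fun _ => 0). split.
    + intros m. simpl map. rewrite !pb_middle, !pb_cons, bern_sub. unfold sum_diff; simpl. ring.
    + intros L. rewrite l1_zero. simpl; lra.
  - inversion Hps as [|? ? Hxy Hps1]; subst. destruct Hsuf as [_ Hsuf1].
    destruct (IH x1 y1 (P ++ [y]) Q) as [Err1 [HE1 HN1]]; auto.
    { apply Forall_app; split; auto. constructor; [apply Hxy|constructor]. }
    { rewrite length_app; simpl length in *. lia. }
    set (S1 := sum_diff ((x1, y1) :: ps)).
    set (G := pb (P ++ map fst ps ++ Q)).
    exists (fun m => Err1 m + (S1 * (y - x1)) * diff (diff G) m). split.
    + intros m. simpl map. rewrite <- !app_comm_cons.
      specialize (HE1 m). rewrite <- !app_assoc in HE1. simpl app in HE1.
      assert (E1 : pb (P ++ x :: x1 :: map fst ps ++ Q) m - pb (P ++ y :: x1 :: map fst ps ++ Q) m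
                   = (x - y) * diff (pb (P ++ x1 :: map fst ps ++ Q)) m).
      { rewrite (pb_middle x P), (pb_middle y P), (pb_cons x), (pb_cons y). apply bern_sub. }
      assert (E2 : diff (pb (P ++ y :: map fst ps ++ Q)) m - diff (pb (P ++ x1 :: map fst ps ++ Q)) m
                   = (y - x1) * diff (diff G) m).
      { unfold G. rewrite (pb_middle y P), (pb_middle x1 P), (pb_cons y), (pb_cons x1), !diff_bern.
        apply bern_sub. }
      assert (Hsd : sum_diff ((x, y) :: (x1, y1) :: ps) = (x - y) + S1) by (unfold S1, sum_diff; simpl; ring).
      rewrite Hsd. fold S1 in HE1.
      replace (pb (P ++ x :: x1 :: map fst ps ++ Q) m - pb (P ++ y :: y1 :: map snd ps ++ Q) m)
        with ((pb (P ++ x :: x1 :: map fst ps ++ Q) m - pb (P ++ y :: x1 :: map fst ps ++ Q) m)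
              + (pb (P ++ y :: x1 :: map fst ps ++ Q) m - pb (P ++ y :: y1 :: map snd ps ++ Q) m)) by ring.
      replace (S1 * (y - x1) * diff (diff G) m) with (S1 * ((y - x1) * diff (diff G) m)) by ring.
      rewrite E1, HE1, <- E2. ring.
    + intros L. eapply Rle_trans; [apply l1_triangle|].
      rewrite l1_scal. pose proof (HN1 L). simpl length. rewrite S_INR.
      assert (HG : l1 L (diff (diff G)) <= b2).
      { apply Hdiff2.
        - unfold G. rewrite !length_app, length_map. simpl length in Hlen. lia.
        - inversion Hps1; subst.
          repeat (apply Forall_app; split); auto. apply (window_good_fst a c h); auto. }
      assert (Hyx : Rabs (y - x1) <= h).
      { inversion Hps1; subst. unfold in_window in *; simpl in *. apply Rabs_le. lra. }
      assert (Hprod : Rabs (S1 * (y - x1)) <= h * h).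
      { rewrite Rabs_mult. apply Rmult_le_compat; auto using Rabs_pos. apply Hsuf1. }
      pose proof (l1_scaled_le L _ _ _ _ Hprod HG). lra.
Qed.

Lemma bucket_bound c ps Q L :
  Forall (good a) Q -> Forall (in_window a c h) ps -> suffix_bounded h ps ->
  (ell + 2 <= length ps + length Q)%nat ->
  l1 L (fun m => pb (map fst ps ++ Q) m - pb (map snd ps ++ Q) m)
    <= h * b1 + INR (length ps) * (h * h * b2).
Proof.
  intros HQ Hps Hsuf Hlen.
  destruct ps as [|[x y] ps].
  - simpl. rewrite (l1_ext L _ (fun _ => 0)) by (intros; ring). rewrite l1_zero.
    pose proof (Rmult_le_pos h b1 Hh Hb1). lra.
  - destruct (telescope_bucket c ps x y [] Q) as [Err [HE HN]]; auto.
    { simpl length in Hlen. simpl. lia. }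
    simpl app in HE. cbn [map app fst snd].
    rewrite (l1_ext L _ _ HE).
    eapply Rle_trans; [apply l1_triangle|]. rewrite l1_scal.
    assert (HD : l1 L (diff (pb (map fst ps ++ Q))) <= b1).
    { apply Hdiff1.
      - rewrite length_app, length_map. simpl length in Hlen. lia.
      - inversion Hps; subst. apply Forall_app; split; auto. apply (window_good_fst a c h); auto. }
    assert (Hs : Rabs (sum_diff ((x, y) :: ps)) <= h) by apply Hsuf.
    pose proof (HN L). pose proof (l1_scaled_le L _ _ _ _ Hs HD). simpl length. rewrite S_INR.
    pose proof (Rmult_le_pos _ _ (Rmult_le_pos h h Hh Hh) Hb2). lra.
Qed.

(* The lists of original and rounded probabilities of a family of buckets. *)
Definition Xs (bs : list (list (R * R))) := concat (map (map fst) bs).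
Definition Ys (bs : list (list (R * R))) := concat (map (map snd) bs).

Definition bucket_good (b : list (R * R)) : Prop :=
  (exists c, Forall (in_window a c h) b) /\ suffix_bounded h b.

Lemma bucket_good_Xs bs : Forall bucket_good bs -> Forall (good a) (Xs bs).
Proof.
  induction 1 as [|b bs [[c Hc] _] _ IH]; [constructor|].
  unfold Xs; simpl. apply Forall_app; split; auto. apply (window_good_fst a c h); auto.
Qed.

(* Replacing the buckets one by one: J buckets holding N pairs cost
   J h b1 + N h^2 b2. *)
Lemma buckets_bound : forall bs Q L,
  Forall bucket_good bs -> Forall (good a) Q ->
  (ell + 2 <= length (Xs bs) + length Q)%nat ->
  l1 L (fun m => pb (Xs bs ++ Q) m - pb (Ys bs ++ Q) m)
    <= INR (length bs) * (h * b1) + INR (length (Xs bs)) * (h * h * b2).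
Proof.
  induction bs as [|b bs IH]; intros Q L Hbs HQ Hlen.
  - rewrite (l1_ext L _ (fun _ => 0)) by (intros; unfold Xs, Ys; simpl; ring).
    rewrite l1_zero. unfold Xs; simpl. lra.
  - inversion Hbs as [|? ? [[c Hc] Hsuf] Hbs1]; subst.
    assert (Hl : length (Xs (b :: bs)) = (length b + length (Xs bs))%nat)
      by (unfold Xs; simpl; rewrite length_app, length_map; auto).
    rewrite Hl in Hlen. unfold Xs, Ys; simpl concat. fold (Xs bs) (Ys bs).
    simpl length. rewrite length_app, length_map, S_INR, plus_INR.
    (* first swap the bucket b inside Xs bs, then the remaining buckets *)
    rewrite (l1_ext L _ (fun m => (pb (map fst b ++ (Xs bs ++ Q)) m - pb (map snd b ++ (Xs bs ++ Q)) m)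
                          + (pb (Xs bs ++ (map snd b ++ Q)) m - pb (Ys bs ++ (map snd b ++ Q)) m))).
    2: { intros m. rewrite <- !app_assoc.
         rewrite (pb_perm (map snd b ++ Xs bs ++ Q) (Xs bs ++ map snd b ++ Q)) by apply Permutation_app_swap_app.
         rewrite (pb_perm (map snd b ++ Ys bs ++ Q) (Ys bs ++ map snd b ++ Q)) by apply Permutation_app_swap_app. ring. }
    eapply Rle_trans; [apply l1_triangle|].
    assert (HB1 := bucket_bound c b (Xs bs ++ Q) L).
    assert (HB2 := IH (map snd b ++ Q) L Hbs1).
    rewrite length_app in HB1. rewrite length_app, length_map in HB2.
    assert (Forall (good a) (Xs bs ++ Q)) by (apply Forall_app; split; auto using bucket_good_Xs).
    assert (Forall (good a) (map snd b ++ Q))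
      by (apply Forall_app; split; auto; apply (window_good_snd a c h); auto).
    specialize (HB1 ltac:(auto) Hc Hsuf ltac:(lia)). specialize (HB2 ltac:(auto) ltac:(lia)).
    lra.
Qed.

End Telescoping.

(** * Sequential floor rounding *)

Lemma Int_part_spec r : IZR (Int_part r) <= r < IZR (Int_part r) + 1.
Proof. destruct (base_Int_part r); lra. Qed.

Lemma Int_part_0 : Int_part 0 = 0%Z.
Proof.
  destruct (Int_part_spec 0) as [H1 H2].
  assert (-1 < Int_part 0 < 1)%Z by (split; apply lt_IZR; simpl; lra). lia.
Qed.

Lemma Int_part_step t d : 0 <= d <= 1 ->
  (Int_part (t + d) = Int_part t \/ Int_part (t + d) = (Int_part t + 1)%Z).
Proof.
  intros Hd. destruct (Int_part_spec t) as [A1 A2]. destruct (Int_part_spec (t + d)) as [B1 B2].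
  assert (C1 : (Int_part t - 1 < Int_part (t + d))%Z) by (apply lt_IZR; rewrite minus_IZR; simpl; lra).
  assert (C2 : (Int_part (t + d) < Int_part t + 2)%Z) by (apply lt_IZR; rewrite plus_IZR; simpl; lra).
  lia.
Qed.

Section SequentialRounding.
Variables (k c : R).
Hypothesis Hk : 0 < k.

Definition in_bucket (x : R) : Prop := c <= x <= c + / k.

Definition excess (l : list R) : R := sumR (map (fun x => x - c) l).

(* floor(k * total excess), i.e. the number of values rounded up to c + 1/k. *)
Definition excess_floor (l : list R) : Z := Int_part (k * excess l).

(* Round each value, from the last to the first, so that the rounded suffix
   sums are |suffix| c + floor(k * excess of the suffix) / k. *)
Fixpoint seq_round (l : list R) : list R :=
  match l with
  | [] => []
  | x :: l' => (c + IZR (excess_floor (x :: l') - excess_floor l') / k) :: seq_round l'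
  end.

Lemma excess_cons x l : excess (x :: l) = (x - c) + excess l.
Proof. reflexivity. Qed.

Lemma excess_eq l : excess l = sumR l - INR (length l) * c.
Proof.
  induction l as [|x l IH]; [unfold excess, sumR; simpl; ring|].
  rewrite excess_cons, IH. cbn [length]. rewrite S_INR. unfold sumR; simpl. ring.
Qed.

Lemma excess_floor_nil : excess_floor [] = 0%Z.
Proof. unfold excess_floor, excess; simpl. rewrite Rmult_0_r. apply Int_part_0. Qed.

Lemma excess_floor_step x l : in_bucket x ->
  (excess_floor (x :: l) - excess_floor l = 0 \/ excess_floor (x :: l) - excess_floor l = 1)%Z.
Proof.
  intros Hx. unfold excess_floor. rewrite excess_cons.
  replace (k * (x - c + excess l)) with (k * excess l + k * (x - c)) by ring.
  destruct (Int_part_step (k * excess l) (k * (x - c))); [|lia|lia].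
  unfold in_bucket in Hx. split; [nra|].
  assert (k * (x - c) <= k * / k) by (apply Rmult_le_compat_l; lra).
  rewrite Rinv_r in H by lra. lra.
Qed.

Lemma excess_floor_range l : Forall in_bucket l -> (0 <= excess_floor l <= Z.of_nat (length l))%Z.
Proof.
  induction 1 as [|x l Hx Hl IH]; [rewrite excess_floor_nil; simpl; lia|].
  destruct (excess_floor_step x l Hx); cbn [length]; lia.
Qed.

Lemma seq_round_length l : length (seq_round l) = length l.
Proof. induction l; simpl; auto. Qed.

Lemma seq_round_sum l : Forall in_bucket l ->
  sumR (seq_round l) = INR (length l) * c + IZR (excess_floor l) / k.
Proof.
  induction 1 as [|x l Hx Hl IH]; [rewrite excess_floor_nil; unfold sumR; simpl; field; lra|].
  simpl seq_round. unfold sumR; simpl fold_right. fold (sumR (seq_round l)). rewrite IH.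
  cbn [length]. rewrite S_INR, minus_IZR. field. lra.
Qed.

Lemma seq_round_in_bucket l : Forall in_bucket l -> Forall in_bucket (seq_round l).
Proof.
  induction 1 as [|x l Hx Hl IH]; simpl; constructor; auto.
  unfold in_bucket. assert (0 < / k) by (apply Rinv_0_lt_compat; lra).
  destruct (excess_floor_step x l Hx) as [E|E]; rewrite E; simpl; unfold Rdiv;
    rewrite ?Rmult_0_l, ?Rmult_1_l; lra.
Qed.

Lemma sum_diff_combine l1 l2 : length l1 = length l2 ->
  sum_diff (combine l1 l2) = sumR l1 - sumR l2.
Proof.
  revert l2; induction l1 as [|x l1 IH]; intros [|y l2] H; simpl in *; try discriminate;
    unfold sum_diff, sumR in *; simpl; [ring|]. rewrite IH by lia. ring.
Qed.

Lemma seq_round_suffix_bounded l : Forall in_bucket l -> suffix_bounded (/ k) (combine l (seq_round l)).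
Proof.
  induction 1 as [|x l Hx Hl IH]; simpl; auto. split; auto.
  change ((x, c + IZR (excess_floor (x :: l) - excess_floor l) / k) :: combine l (seq_round l))
    with (combine (x :: l) (seq_round (x :: l))).
  rewrite sum_diff_combine by (simpl; rewrite seq_round_length; auto).
  rewrite seq_round_sum by (constructor; auto).
  destruct (Int_part_spec (k * excess (x :: l))) as [A B].
  fold (excess_floor (x :: l)) in A, B. rewrite excess_eq in A, B.
  set (z := IZR (excess_floor (x :: l))) in *.
  set (sx := sumR (x :: l)) in *.
  apply Rabs_le. split.
  - assert (z / k <= sx - INR (length (x :: l)) * c).
    { apply (Rmult_le_reg_l k); [lra|]. field_simplify; lra. }
    assert (0 <= / k) by (apply Rlt_le, Rinv_0_lt_compat; lra). lra.
  - assert (sx - INR (length (x :: l)) * c < z / k + / k).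
    { apply (Rmult_lt_reg_l k); [lra|]. field_simplify; lra. }
    lra.
Qed.

Lemma seq_round_perm l : Forall in_bucket l ->
  Permutation (seq_round l)
    (repeat (c + / k) (Z.to_nat (excess_floor l))
       ++ repeat c (length l - Z.to_nat (excess_floor l))).
Proof.
  induction 1 as [|x l Hx Hl IH]; [rewrite excess_floor_nil; simpl; auto|]. cbn [seq_round length].
  pose proof (excess_floor_range l Hl) as Hr.
  destruct (excess_floor_step x l Hx) as [E|E]; rewrite E.
  - replace (c + IZR 0 / k) with c by (simpl; field; lra).
    replace (Z.to_nat (excess_floor (x :: l))) with (Z.to_nat (excess_floor l)) by lia.
    replace (S (length l) - Z.to_nat (excess_floor l))%nat
      with (S (length l - Z.to_nat (excess_floor l))) by lia.
    cbn [repeat]. apply Permutation_cons_app, IH.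
  - replace (c + IZR 1 / k) with (c + / k) by (simpl; field; lra).
    replace (Z.to_nat (excess_floor (x :: l))) with (S (Z.to_nat (excess_floor l))) by lia.
    replace (S (length l) - S (Z.to_nat (excess_floor l)))%nat
      with (length l - Z.to_nat (excess_floor l))%nat by lia.
    simpl. apply perm_skip, IH.
Qed.

End SequentialRounding.

Lemma l1_buckets a h bs : 0 < a -> a < /2 -> 0 <= h -> Forall (bucket_good a h) bs ->
  (2 <= length (Xs bs))%nat ->
  l1 (length (Xs bs)) (fun m => pb (Xs bs) m - pb (Ys bs) m)
    <= 2 * INR (length bs) * h / sqrt (INR (length (Xs bs)) * a) + 12 * (h * h) / a.
Proof.
  intros Ha Ha2 Hh Hbs HN2.
  set (N := length (Xs bs)) in *.
  assert (HNR : 2 <= INR N) by (apply (le_INR 2) in HN2; simpl in HN2; lra).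
  set (V := INR (S (N - 2)) * (2 * a)).
  assert (HV : INR N * a <= V).
  { unfold V. replace (S (N - 2)) with (N - 1)%nat by lia. rewrite minus_INR by lia. simpl. nra. }
  assert (HNa : 0 < INR N * a) by nra.
  assert (Hmono : forall zs : list R, (N - 2 <= length zs)%nat -> / (INR (S (length zs)) * (2 * a)) <= / V).
  { intros zs Hz. apply Rinv_le_contravar; [nra|]. apply Rmult_le_compat_r; [lra|]. apply le_INR; lia. }
  set (b1 := 2 * sqrt (/ V)). set (b2 := 12 * / V).
  assert (Hb1 : 0 <= b1) by (unfold b1; pose proof (sqrt_pos (/ V)); lra).
  assert (Hb2 : 0 <= b2) by (unfold b2; pose proof (Rinv_0_lt_compat V ltac:(lra)); lra).
  pose proof (buckets_bound a h b1 b2 (N - 2) Hh Hb1 Hb2) as B.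
  specialize (B ltac:(intros zs Hz Hg L; eapply Rle_trans; [apply (l1_diff_pb a); auto|];
                      apply Rmult_le_compat_l; [lra|]; apply sqrt_le_1_alt, Hmono; auto)).
  specialize (B ltac:(intros zs Hz Hg L; eapply Rle_trans; [apply (l1_diff2_pb a); auto|];
                      apply Rmult_le_compat_l; [lra|]; apply Hmono; auto)).
  specialize (B bs [] N Hbs (Forall_nil _) ltac:(simpl; lia)). rewrite !app_nil_r in B. fold N in B.
  eapply Rle_trans; [exact B|]. apply Rplus_le_compat.
  - assert (Hs : sqrt (/ V) <= / sqrt (INR N * a)).
    { rewrite <- sqrt_inv. apply sqrt_le_1_alt, Rinv_le_contravar; lra. }
    unfold b1, Rdiv. pose proof (pos_INR (length bs)).
    apply Rle_trans with (INR (length bs) * h * 2 * sqrt (/ V)); [right; ring|].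
    replace (2 * INR (length bs) * h * / sqrt (INR N * a))
      with (INR (length bs) * h * 2 * / sqrt (INR N * a)) by ring.
    apply Rmult_le_compat_l; [|lra]. apply Rmult_le_pos; [|lra]. nra.
  - unfold b2, Rdiv.
    replace (INR N * (h * h * (12 * / V))) with (12 * (h * h) * (INR N / V)) by (field; lra).
    apply Rmult_le_compat_l; [nra|].
    apply (Rmult_le_reg_l V); [lra|]. field_simplify; [|lra|lra].
    apply (Rmult_le_reg_l a); [lra|]. field_simplify; lra.
Qed.

Lemma map_fst_combine {A B} (l1 : list A) (l2 : list B) : length l1 = length l2 ->
  map fst (combine l1 l2) = l1.
Proof. revert l2; induction l1; intros [|y t] H; simpl in *; try discriminate; f_equal; auto. Qed.

Lemma map_snd_combine {A B} (l1 : list A) (l2 : list B) : length l1 = length l2 ->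
  map snd (combine l1 l2) = l2.
Proof. revert l2; induction l1; intros [|y t] H; simpl in *; try discriminate; f_equal; auto. Qed.

Lemma Forall_combine {A B} (P : A -> Prop) (Q : B -> Prop) l1 l2 :
  Forall P l1 -> Forall Q l2 -> Forall (fun xy => P (fst xy) /\ Q (snd xy)) (combine l1 l2).
Proof. intros H1; revert l2; induction H1; intros l2 H2; simpl; auto. destruct H2; simpl; auto. Qed.

Section BucketPairs.
Variables (kR : R) (p : nat -> R) (ord : nat -> list nat).

Definition bucket_values (j : nat) : list R := map p (ord j).
Definition bucket_pairs (j : nat) : list (R * R) :=
  combine (bucket_values j) (seq_round kR (INR j / kR) (bucket_values j)).

Lemma Xs_bucket_pairs r : Xs (map bucket_pairs r) = map p (flat_map ord r).
Proof.
  induction r as [|j r IH]; simpl; auto. unfold Xs in *. simpl. rewrite IH, map_app. f_equal.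
  unfold bucket_pairs. rewrite map_fst_combine; auto. rewrite seq_round_length; auto.
Qed.

Lemma Ys_bucket_pairs r (q : nat -> R) :
  (forall j, In j r -> Permutation (seq_round kR (INR j / kR) (bucket_values j)) (map q (ord j))) ->
  Permutation (Ys (map bucket_pairs r)) (map q (flat_map ord r)).
Proof.
  induction r as [|j r IH]; intros H; simpl; auto.
  unfold Ys in *. simpl. rewrite map_app. apply Permutation_app.
  - unfold bucket_pairs. rewrite map_snd_combine by (rewrite seq_round_length; auto). apply H; simpl; auto.
  - apply IH. intros; apply H; simpl; auto.
Qed.

Lemma bucket_pairs_good a j : 0 < kR -> a <= INR j / kR -> INR j / kR + / kR <= 1 - a ->
  Forall (in_bucket kR (INR j / kR)) (bucket_values j) ->
  bucket_good a (/ kR) (bucket_pairs j).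
Proof.
  intros Hk Ha1 Ha2 Hin. split.
  - exists (INR j / kR). unfold bucket_pairs.
    eapply Forall_impl; [|apply Forall_combine; [exact Hin|apply seq_round_in_bucket; auto]].
    intros [x y] [Hx Hy]. unfold in_window, in_bucket, good in *; simpl in *. lra.
  - apply seq_round_suffix_bounded; auto.
Qed.

End BucketPairs.

Lemma INR_div2 k : 2 * INR (Nat.div k 2) <= INR k <= 2 * INR (Nat.div k 2) + 1.
Proof.
  pose proof (Nat.div_mod_eq k 2). pose proof (Nat.mod_upper_bound k 2 ltac:(lia)).
  split.
  - replace (2 * INR (k / 2)) with (INR (2 * (k / 2))) by (rewrite mult_INR; simpl; ring).
    apply le_INR; lia.
  - replace (2 * INR (k / 2) + 1) with (INR (2 * (k / 2) + 1)) by (rewrite plus_INR, mult_INR; simpl; ring).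
    apply le_INR; lia.
Qed.

Lemma lowIdx_bound k alpha : 1 <= Rpower (INR k) alpha ->
  Rpower (INR k) alpha / 2 <= INR (lowIdx k alpha).
Proof.
  intros H. unfold lowIdx. set (x := Rpower (INR k) alpha) in *.
  destruct (Int_part_spec x) as [A B].
  assert (H1 : (1 <= Int_part x)%Z) by (assert (0 < Int_part x)%Z by (apply lt_IZR; simpl; lra); lia).
  rewrite INR_IZR_INZ, Z2Nat.id by lia.
  apply IZR_le in H1. simpl in H1.
  destruct (Rle_lt_dec 2 x); lra.
Qed.

Lemma Rpower_ge_1 x e : 1 <= x -> 0 <= e -> 1 <= Rpower x e.
Proof. intros Hx He. rewrite <- (Rpower_O x) by lra. apply Rle_Rpower; lra. Qed.

Lemma bucket_window k alpha j : (4 <= k)%nat -> 0 < alpha < 1 -> In j (bucket_range k alpha) ->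
  let a := Rpower (INR k) alpha / (4 * INR k) in
  a <= INR j / INR k /\ INR j / INR k + / INR k <= 1 - a.
Proof.
  intros Hk Hal Hj a.
  apply (le_INR 4) in Hk. simpl in Hk.
  assert (HA1 : 1 <= Rpower (INR k) alpha) by (apply Rpower_ge_1; lra).
  assert (HA2 : Rpower (INR k) alpha <= INR k).
  { rewrite <- (Rpower_1 (INR k)) at 2 by lra. apply Rle_Rpower; lra. }
  unfold bucket_range in Hj. apply in_seq in Hj.
  assert (Hj1 : INR (lowIdx k alpha) <= INR j) by (apply le_INR; lia).
  assert (Hj2 : INR j <= INR (Nat.div k 2)) by (apply le_INR; lia).
  pose proof (lowIdx_bound k alpha HA1). pose proof (INR_div2 k).
  unfold a. split.
  - apply (Rmult_le_reg_l (4 * INR k)); [lra|]. field_simplify; lra.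
  - assert (INR j / INR k <= / 2) by (apply (Rmult_le_reg_l (INR k)); [lra|]; field_simplify; lra).
    assert (/ INR k <= / 4) by (apply Rinv_le_contravar; lra).
    assert (Rpower (INR k) alpha / (4 * INR k) <= / 4)
      by (apply (Rmult_le_reg_l (4 * INR k)); [lra|]; field_simplify; lra).
    lra.
Qed.

Lemma bucket_values_in k alpha n p ord j : (1 <= k)%nat -> In j (bucket_range k alpha) ->
  (forall i, In i (ord j) -> (i < n)%nat /\ inI k j (p i)) ->
  Forall (in_bucket (INR k) (INR j / INR k)) (bucket_values p ord j).
Proof.
  intros Hk Hj Hord. apply (le_INR 1) in Hk. simpl in Hk.
  unfold bucket_values. apply Forall_map, Forall_forall. intros i Hi.
  destruct (Hord i Hi) as [_ HI]. unfold inI, in_bucket in *.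
  replace (INR j / INR k + / INR k) with (INR (S j) / INR k) by (rewrite S_INR; field; lra).
  destruct (Nat.ltb j (Nat.div k 2)); [lra|].
  destruct HI as [Hjeq HI]. split; [lra|].
  assert (/ 2 <= INR (S j) / INR k); [|lra].
  pose proof (INR_div2 k). rewrite S_INR, Hjeq.
  apply (Rmult_le_reg_l (INR k)); [lra|]. field_simplify; lra.
Qed.

Definition is_medium_rounding (k j : nat) (p q : nat -> R) (l : list nat) : Prop :=
  forall t, (t < length l)%nat ->
    ((Z.of_nat t < m_bucket k j p l)%Z -> q (nth t l O) = INR (S j) / INR k) /\
    ((m_bucket k j p l <= Z.of_nat t)%Z -> q (nth t l O) = INR j / INR k).

(* The medium-expectation rounding of a bucket is a permutation of its
   sequential floor rounding: both round floor(k S_j) values up. *)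
Lemma rounding_perm k j p q l : (1 <= k)%nat ->
  Forall (in_bucket (INR k) (INR j / INR k)) (map p l) -> is_medium_rounding k j p q l ->
  Permutation (seq_round (INR k) (INR j / INR k) (map p l)) (map q l).
Proof.
  intros Hk Hin Hq. apply (le_INR 1) in Hk. simpl in Hk.
  set (c := INR j / INR k).
  assert (Hm : m_bucket k j p l = excess_floor (INR k) c (map p l)).
  { unfold m_bucket, excess_floor, excess, S_bucket. rewrite map_map. reflexivity. }
  pose proof (excess_floor_range (INR k) c ltac:(lra) _ Hin) as Hr. rewrite length_map in Hr.
  rewrite <- Hm in Hr.
  eapply perm_trans; [apply seq_round_perm; [lra|exact Hin]|].
  rewrite <- Hm, length_map.
  set (m := Z.to_nat (m_bucket k j p l)).
  apply Permutation_refl'.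
  apply (nth_ext (repeat (c + / INR k) m ++ repeat c (length l - m)) (map q l) 0 (q O)).
  { rewrite length_app, !repeat_length, length_map. lia. }
  intros t Ht. rewrite length_app, !repeat_length in Ht.
  rewrite map_nth. destruct (Hq t ltac:(lia)) as [Q1 Q2].
  destruct (Nat.lt_ge_cases t m) as [Htm|Htm].
  - rewrite app_nth1, nth_repeat_lt by (rewrite ?repeat_length; auto).
    rewrite Q1 by lia. unfold c. rewrite S_INR. field. lra.
  - rewrite app_nth2, repeat_length, nth_repeat_lt by (rewrite ?repeat_length; lia).
    rewrite Q2 by lia. reflexivity.
Qed.

Lemma theorem_buckets k alpha n p q ord : (4 <= k)%nat -> 0 < alpha < 1 ->
  (forall j, In j (bucket_range k alpha) ->
     forall i, In i (ord j) -> (i < n)%nat /\ inI k j (p i)) ->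
  (forall j, In j (bucket_range k alpha) -> is_medium_rounding k j p q (ord j)) ->
  let bs := map (bucket_pairs (INR k) p ord) (bucket_range k alpha) in
  Forall (bucket_good (Rpower (INR k) alpha / (4 * INR k)) (/ INR k)) bs /\
  Xs bs = map p (flat_map ord (bucket_range k alpha)) /\
  Permutation (Ys bs) (map q (flat_map ord (bucket_range k alpha))).
Proof.
  intros Hk Hal Hord Hq bs.
  assert (Hin : forall j, In j (bucket_range k alpha) ->
                  Forall (in_bucket (INR k) (INR j / INR k)) (bucket_values p ord j))
    by (intros j Hj; apply (bucket_values_in k alpha n); auto; lia).
  split; [|split].
  - apply Forall_map, Forall_forall. intros j Hj.
    destruct (bucket_window k alpha j Hk Hal Hj).
    apply bucket_pairs_good; auto. apply (le_INR 4) in Hk. simpl in Hk. lra.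
  - apply Xs_bucket_pairs.
  - apply Ys_bucket_pairs. intros j Hj. apply rounding_perm; auto. lia.
Qed.

Lemma window_param_bounds k alpha : 4 <= INR k -> 0 < alpha < 1 ->
  0 < Rpower (INR k) alpha / (4 * INR k) <= / 4.
Proof.
  intros Hk Hal.
  assert (HA1 : 1 <= Rpower (INR k) alpha) by (apply Rpower_ge_1; lra).
  assert (HA2 : Rpower (INR k) alpha <= INR k).
  { rewrite <- (Rpower_1 (INR k)) at 2 by lra. apply Rle_Rpower; lra. }
  split; [apply Rdiv_lt_0_compat; lra|].
  apply (Rmult_le_reg_l (4 * INR k)); [lra|]. field_simplify; lra.
Qed.

Lemma bucket_count k alpha : (2 <= k)%nat -> INR (length (bucket_range k alpha)) * / INR k <= 1.
Proof.
  intros Hk. apply (le_INR 2) in Hk. simpl in Hk.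
  assert (Hl : (length (bucket_range k alpha) <= S (Nat.div k 2))%nat)
    by (unfold bucket_range; rewrite length_seq; lia).
  apply le_INR in Hl. rewrite S_INR in Hl. pose proof (INR_div2 k).
  apply (Rmult_le_reg_l (INR k)); [lra|]. field_simplify; lra.
Qed.

Lemma two_le_of_gt_Rpower x e N : 1 <= x -> 0 <= e -> INR N > Rpower x e -> (2 <= N)%nat.
Proof.
  intros Hx He HN. pose proof (Rpower_ge_1 x e Hx He).
  destruct (le_lt_dec 2 N) as [|Hl]; auto.
  assert (Hl1 : (N <= 1)%nat) by lia. apply le_INR in Hl1. simpl in Hl1. lra.
Qed.

Lemma Rpower_pos x e : 0 < Rpower x e.
Proof. unfold Rpower; apply exp_pos. Qed.

(* First-order term: with N > k^beta and a = k^alpha/(4k), N a > k^(alpha+beta-1)/4,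
   hence (J/k) / sqrt(N a) <= 2 k^(-(alpha+beta-1)/2) when J/k <= 1. *)
Lemma rate_first_order alpha beta kR J N : alpha + beta > 1 -> 4 <= kR ->
  0 <= J -> J * / kR <= 1 -> N > Rpower kR beta ->
  J * / kR / sqrt (N * (Rpower kR alpha / (4 * kR)))
    <= 2 * Rpower kR (- ((alpha + beta - 1) / 2)).
Proof.
  intros Hab Hk HJ0 HJ HN.
  set (E := Rpower kR (alpha + beta - 1)).
  assert (HE : 0 < E) by apply Rpower_pos.
  assert (HNa : E / 4 < N * (Rpower kR alpha / (4 * kR))).
  { assert (HEdef : Rpower kR beta * Rpower kR alpha / kR = E).
    { unfold E. rewrite <- (Rpower_1 kR) at 3 by lra.
      unfold Rdiv. rewrite <- Rpower_Ropp, <- !Rpower_plus. f_equal. ring. }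
    rewrite <- HEdef. pose proof (Rpower_pos kR alpha).
    apply (Rmult_lt_reg_l (4 * kR)); [lra|]. field_simplify; [|lra|lra]. nra. }
  assert (HT : Rpower kR (- ((alpha + beta - 1) / 2)) = / sqrt E).
  { rewrite Rpower_Ropp. f_equal. unfold E. rewrite <- Rpower_sqrt by auto.
    rewrite Rpower_mult. f_equal. }
  assert (Hsq : 0 < sqrt E) by (apply sqrt_lt_R0; auto).
  assert (Hs : / sqrt (N * (Rpower kR alpha / (4 * kR))) <= 2 * / sqrt E).
  { replace (2 * / sqrt E) with (/ sqrt (E / 4)).
    - apply Rinv_le_contravar; [apply sqrt_lt_R0; lra|]. apply sqrt_le_1_alt; lra.
    - rewrite sqrt_div_alt by lra.
      replace (sqrt 4) with 2 by (replace 4 with (2 * 2) by ring; rewrite sqrt_square; lra).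
      field. lra. }
  rewrite HT. unfold Rdiv.
  assert (0 <= J * / kR) by (apply Rmult_le_pos; [lra|apply Rlt_le, Rinv_0_lt_compat; lra]).
  assert (0 <= / sqrt (N * (Rpower kR alpha / (4 * kR))))
    by (apply Rlt_le, Rinv_0_lt_compat, sqrt_lt_R0; lra).
  nra.
Qed.

(* Second-order term: h^2 / a = 4 / (k k^alpha) <= 4 k^(-alpha) with h = 1/k. *)
Lemma rate_second_order alpha kR : 1 <= kR ->
  / kR * / kR / (Rpower kR alpha / (4 * kR)) <= 4 * Rpower kR (- alpha).
Proof.
  intros Hk. rewrite Rpower_Ropp. pose proof (Rpower_pos kR alpha).
  replace (/ kR * / kR / (Rpower kR alpha / (4 * kR))) with (4 * / Rpower kR alpha * / kR)
    by (field; lra).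
  assert (/ kR <= 1) by (rewrite <- Rinv_1; apply Rinv_le_contravar; lra).
  assert (0 < / Rpower kR alpha) by (apply Rinv_0_lt_compat; lra). nra.
Qed.

Theorem mainTheorem13 (alpha beta : R) :
  0 < alpha < 1 -> 0 < beta < 1 -> alpha + beta > 1 ->
  exists C : R, exists K : nat, forall k : nat, (K <= k)%nat ->
  forall (n : nat) (p q : nat -> R) (ord : nat -> list nat),
    (forall i, (i < n)%nat -> 0 <= p i <= 1) ->
    (* ord j lists I*_j = {i : p_i in I_j} in some fixed order *)
    (forall j, In j (bucket_range k alpha) ->
       NoDup (ord j) /\ (forall i, In i (ord j) <-> ((i < n)%nat /\ inI k j (p i)))) ->
    (* medium-expectation rounding *)
    (forall j, In j (bucket_range k alpha) ->
       forall t, (t < length (ord j))%nat ->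
         ((Z.of_nat t < m_bucket k j p (ord j))%Z ->
            q (nth t (ord j) O) = INR (S j) / INR k) /\
         ((m_bucket k j p (ord j) <= Z.of_nat t)%Z ->
            q (nth t (ord j) O) = INR j / INR k)) ->
    (* M_1^*(k) is enumerated by the concatenation of the buckets *)
    let M := flat_map ord (bucket_range k alpha) in
    INR (length M) > Rpower (INR k) beta ->
    tv_pb (map p M) (map q M)
      <= C * (Rpower (INR k) (- ((alpha + beta - 1) / 2))
              + Rpower (INR k) (- alpha) + Rpower (INR k) (- (1/2))).
Proof.
  intros Hal Hbe Hab. exists 24, 4%nat. intros k Hk n p q ord _ Hord Hq M HN.
  assert (HkR : 4 <= INR k) by (apply (le_INR 4) in Hk; simpl in Hk; lra).
  set (a := Rpower (INR k) alpha / (4 * INR k)).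
  destruct (window_param_bounds k alpha HkR Hal) as [Ha0 Ha4]. fold a in Ha0, Ha4.
  assert (Hmem : forall j, In j (bucket_range k alpha) ->
                   forall i, In i (ord j) -> (i < n)%nat /\ inI k j (p i))
    by (intros j Hj i; apply (Hord j Hj)).
  destruct (theorem_buckets k alpha n p q ord Hk Hal Hmem Hq) as [Hgood [HX HY]].
  set (bs := map (bucket_pairs (INR k) p ord) (bucket_range k alpha)) in *. fold M in HX, HY.
  assert (HJ : INR (length bs) * / INR k <= 1) by (unfold bs; rewrite length_map; apply bucket_count; lia).
  assert (HN2 : (2 <= length (Xs bs))%nat)
    by (rewrite HX, length_map; apply (two_le_of_gt_Rpower (INR k) beta); lra).
  (* tv = |pb Xs - pb Ys|_1 / 2, bounded by l1_buckets and the two rates *)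
  unfold tv_pb. rewrite !length_map, Nat.max_id, <- HX, <- (pb_perm _ _ HY).
  replace (length M) with (length (Xs bs)) by (rewrite HX, length_map; reflexivity).
  eapply Rle_trans.
  { apply Rmult_le_compat_l; [lra|]. apply (l1_buckets a (/ INR k)); auto; try lra.
    apply Rlt_le, Rinv_0_lt_compat; lra. }
  rewrite HX, length_map in *.
  pose proof (rate_first_order alpha beta (INR k) (INR (length bs)) (INR (length M))
                Hab HkR (pos_INR _) HJ HN) as H1.
  pose proof (rate_second_order alpha (INR k) ltac:(lra)) as H2. fold a in H1, H2.
  pose proof (Rpower_pos (INR k) (- ((alpha + beta - 1) / 2))).
  pose proof (Rpower_pos (INR k) (- alpha)). pose proof (Rpower_pos (INR k) (- (1 / 2))).
  unfold Rdiv in *. nra.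
Qed.
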